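(* Let $0<\alpha<1$ and for integers $n\ge 2$ define $w_k^{(\alpha)}=(-1)^k\binom{\alpha}{k}$, $$W_n^0=\sum_{k=0}^{n-1}w_k^{(\alpha)},\qquad W_n^1=nW_n^0-\sum_{k=0}^{n-1}k\,w_k^{(\alpha)}-\frac{(n-\alpha/2)^{1-\alpha}}{\Gamma(2-\alpha)}.$$ Then, as $n\to\infty$, $$W_n^0=\frac{1}{\Gamma(1-\alpha)n^\alpha}-\frac{\alpha+1}{2\Gamma(-\alpha)n^{1+\alpha}}+\frac{(2+\alpha)(1+3\alpha)}{24\,\Gamma(-1-\alpha)n^{2+\alpha}}+O\!\left(\frac{1}{n^{3+\alpha}}\right),$$ $$W_n^1=\frac{\alpha-2}{24\,\Gamma(-\alpha)n^{1+\alpha}}+O\!\left(\frac{1}{n^{2+\alpha}}\right).$$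
   Context: Binomial coefficients with real upper argument are $\binom{a}{k}=\frac{a(a-1)\cdots(a-k+1)}{k!}$, $\binom{a}{0}=1$. $\Gamma$ is the Euler gamma function, extended to negative non-integer arguments by analytic continuation. *)

From Stdlib Require Import Reals Lra Lia ClassicalEpsilon Factorial.
Open Scope R_scope.

Fixpoint sumR (n : nat) (f : nat -> R) : R :=
  match n with O => 0 | S m => sumR m f + f m end.

Fixpoint prodR (n : nat) (f : nat -> R) : R :=
  match n with O => 1 | S m => prodR m f * f m end.

Definition gbinom (a : R) (k : nat) : R :=
  prodR k (fun i => a - INR i) / INR (fact k).

(* Gauss/Euler product sequence for Gamma:
   n! n^x / (x (x+1) ... (x+n)) *)
Definition gamma_seq (x : R) (n : nat) : R :=
  INR (fact n) * Rpower (INR n) x / prodR (S n) (fun k => x + INR k).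

(* Euler Gamma function, valid (by Gauss's limit formula) for all real x
   that are not non-positive integers, including negative non-integers
   (where it agrees with the analytic continuation). *)
Definition Gamma (x : R) : R :=
  epsilon (inhabits 0) (fun g => Un_cv (gamma_seq x) g).

Definition w (alpha : R) (k : nat) : R := (-1) ^ k * gbinom alpha k.

Definition W0 (alpha : R) (n : nat) : R := sumR n (fun k => w alpha k).

Definition W1 (alpha : R) (n : nat) : R :=
  INR n * W0 alpha n - sumR n (fun k => INR k * w alpha k)
  - Rpower (INR n - alpha / 2) (1 - alpha) / Gamma (2 - alpha).

(* For n >= 1 one has w_(k+1) = -a/(k+1) W0(k+1), hence W0(n+1) = (1 - a/n) W0(n).
   Normalize b_n = n^a W0(n) / F(1/n), where F(x) = 1 + a(1+a)/2 x + a(1+a)(2+a)(1+3a)/24 x^2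
   is the truncated asymptotic series.  Expanding (1 + 1/n)^a to third order, an exact
   polynomial identity shows b_(n+1)/b_n = 1 + O(n^-4), so log b_n converges with error
   O(n^-3).  Comparing b_n with Gauss's product for Gamma(1-a) identifies its limit as
   1/Gamma(1-a), and Gamma(x+1) = x Gamma(x) gives Gamma(-a), Gamma(-1-a), Gamma(2-a).
   For W1, summation by parts gives n W0(n) - sum k w_k = (n-a) W0(n)/(1-a), and a third-order
   expansion of (n - a/2)^(1-a) cancels everything but the n^(-1-a) term. *)

From Coquelicot Require Import Coquelicot.
From Stdlib Require Import Reals Lra Lia List ClassicalEpsilon.
Import ListNotations.
Open Scope R_scope.

Lemma Rpower_1_l (x : R) : Rpower 1 x = 1.
Proof. unfold Rpower. rewrite ln_1, Rmult_0_r. apply exp_0. Qed.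

Lemma Rpower_nat_plus (x y : R) (k : nat) :
  0 < x -> Rpower x (INR k + y) = x ^ k * Rpower x y.
Proof. intro Hx. rewrite Rpower_plus, Rpower_pow by exact Hx. reflexivity. Qed.

Lemma Rpower_le_nonpos_exponent (x y e : R) :
  0 < x -> x <= y -> e <= 0 -> Rpower y e <= Rpower x e.
Proof.
  intros Hx Hxy He.
  replace e with (- (- e)) by ring. rewrite (Rpower_Ropp y (- e)), (Rpower_Ropp x (- e)).
  apply Rinv_le_contravar; [apply exp_pos | apply Rle_Rpower_l; lra].
Qed.

Lemma Rabs_ln_le (u : R) : Rabs (u - 1) <= 1 / 2 -> Rabs (ln u) <= 2 * Rabs (u - 1).
Proof.
  intro Hu. apply Rabs_le_between' in Hu.
  assert (Hu0 : 0 < u) by lra.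
  assert (Hln : forall v, 0 < v -> ln v <= v - 1).
  { intros v Hv. rewrite <- (ln_exp (v - 1)).
    apply ln_le; [exact Hv | pose proof (exp_ineq1_le (v - 1)); lra]. }
  pose proof (Hln u Hu0) as Hup.
  pose proof (Hln (/ u) (Rinv_0_lt_compat _ Hu0)) as Hlow. rewrite ln_Rinv in Hlow by exact Hu0.
  assert (1 - / u >= - 2 * Rabs (u - 1)).
  { replace (1 - / u) with ((u - 1) / u) by (field; lra).
    destruct (Rle_dec 1 u).
    - assert (0 <= (u - 1) / u) by (apply Rdiv_le_0_compat; lra).
      pose proof (Rabs_pos (u - 1)). lra.
    - rewrite Rabs_left1 by lra.
      assert ((u - 1) / u * u = u - 1) by (field; lra). nra. }
  apply Rabs_le. pose proof (Rle_abs (u - 1)). pose proof (Rabs_pos (u - 1)). lra.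
Qed.

Lemma Rabs_exp_sub_1_le (d : R) : Rabs (exp d - 1) <= Rabs d * exp (Rabs d).
Proof.
  pose proof (exp_ineq1_le d). pose proof (exp_ineq1_le (- d)). pose proof (exp_pos d).
  assert (Hinv : exp d * exp (- d) = 1) by (rewrite <- exp_plus, Rplus_opp_r; apply exp_0).
  destruct (Rle_dec 0 d).
  - rewrite !(Rabs_pos_eq d), Rabs_pos_eq by lra.
    assert (0 <= exp d * (exp (- d) - (1 - d))) by (apply Rmult_le_pos; lra). nra.
  - assert (exp d <= 1) by (rewrite <- exp_0; left; apply exp_increasing; lra).
    rewrite !(Rabs_left d), Rabs_left1 by lra.
    assert (0 <= - d * (exp (- d) - 1)) by (apply Rmult_le_pos; lra). nra.
Qed.

Lemma Rabs_exp_sub_exp_le (x l d D : R) :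
  Rabs (x - l) <= d -> d <= D -> Rabs (exp x - exp l) <= exp l * exp D * d.
Proof.
  intros Hd HdD. pose proof (exp_pos l). pose proof (Rabs_pos (x - l)).
  replace (exp x - exp l) with (exp l * (exp (x - l) - 1))
    by (unfold Rminus; rewrite exp_plus, exp_Ropp; field; apply Rgt_not_eq, exp_pos).
  rewrite Rabs_mult, (Rabs_pos_eq (exp l)) by lra.
  rewrite Rmult_assoc. apply Rmult_le_compat_l; [lra|].
  eapply Rle_trans; [apply Rabs_exp_sub_1_le|].
  assert (exp (Rabs (x - l)) <= exp D).
  { destruct (Rle_lt_or_eq_dec _ _ (Rle_trans _ _ _ Hd HdD)) as [Hlt | ->];
      [left; apply exp_increasing, Hlt | right; reflexivity]. }
  pose proof (exp_pos (Rabs (x - l))). nra.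
Qed.

(** * Third-order binomial expansion *)

Definition falling (c : R) (k : nat) : R := prodR k (fun i => c - INR i).

Definition taylor3 (c z : R) : R :=
  1 + c * z + c * (c - 1) / 2 * z ^ 2 + c * (c - 1) * (c - 2) / 6 * z ^ 3.

Definition taylor3_const (c : R) : R :=
  Rabs (falling c 4) / 24 * Rpower (1 / 2) (c - 4).

Lemma taylor3_const_nonneg (c : R) : 0 <= taylor3_const c.
Proof.
  apply Rmult_le_pos; [| left; apply exp_pos].
  pose proof (Rabs_pos (falling c 4)); lra.
Qed.

Section BinomialTaylor.
Variables c s : R.
Hypothesis Hs : Rabs s <= 1.

Let f (u : R) : R := Rpower (1 + s * u) c.
Let df (k : nat) (u : R) : R := s ^ k * falling c k * Rpower (1 + s * u) (c - INR k).

Lemma locally_base_pos (t : R) : 0 < 1 + s * t -> locally t (fun u => 0 < 1 + s * u).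
Proof.
  intro Ht. assert (Hr : 0 < (1 + s * t) / 2) by lra.
  exists (mkposreal _ Hr). intros u Hu.
  change (Rabs (u - t) < (1 + s * t) / 2) in Hu.
  assert (Rabs (s * (u - t)) <= Rabs (u - t)).
  { rewrite Rabs_mult. pose proof (Rabs_pos (u - t)). nra. }
  pose proof (Rle_abs (- (s * (u - t)))) as Hle. rewrite Rabs_Ropp in Hle. lra.
Qed.

Lemma is_derive_df (k : nat) (t : R) : 0 < 1 + s * t -> is_derive (df k) t (df (S k) t).
Proof.
  intro Ht. unfold df.
  replace (s ^ S k * falling c (S k) * Rpower (1 + s * t) (c - INR (S k)))
    with (s ^ k * falling c k * (s * ((c - INR k) * Rpower (1 + s * t) (c - INR k - 1)))).
  2:{ unfold falling. simpl prodR. rewrite S_INR.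
      replace (c - INR k - 1) with (c - (INR k + 1)) by ring. simpl. ring. }
  apply is_derive_scal.
  apply (is_derive_comp (fun x => Rpower x (c - INR k)) (fun u => 1 + s * u)).
  - apply is_derive_Reals, derivable_pt_lim_power, Ht.
  - auto_derive; auto; ring.
Qed.

Lemma Derive_n_df (k : nat) (t : R) :
  0 < 1 + s * t -> ex_derive_n f k t /\ Derive_n f k t = df k t.
Proof.
  revert t. induction k as [|k IH]; intros t Ht.
  - split; [exact I|]. unfold f, df, falling. simpl. rewrite Rminus_0_r. ring.
  - assert (Hloc : locally t (fun u => Derive_n f k u = df k u)).
    { apply (filter_imp (fun u => 0 < 1 + s * u)); [|apply locally_base_pos, Ht].
      intros u Hu. apply IH, Hu. }
    split.
    + apply (ex_derive_ext_loc (df k)).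
      * apply (filter_imp (fun u => Derive_n f k u = df k u)); [|exact Hloc].
        intros u Hu; symmetry; exact Hu.
      * eexists. apply is_derive_df, Ht.
    + simpl. rewrite (Derive_ext_loc _ (df k) t Hloc).
      apply is_derive_unique, is_derive_df, Ht.
Qed.

Lemma taylor3_lagrange (y : R) : 0 < y <= 1 / 2 -> c <= 4 ->
  Rabs (Rpower (1 + s * y) c - taylor3 c (s * y)) <= taylor3_const c * y ^ 4.
Proof.
  intros Hy Hc.
  assert (Hbase : forall t, 0 <= t <= y -> 1 / 2 <= 1 + s * t).
  { intros t Ht. assert (Rabs (s * t) <= y).
    { rewrite Rabs_mult, (Rabs_pos_eq t) by lra. pose proof (Rabs_pos s). nra. }
    pose proof (Rle_abs (- (s * t))) as Hle. rewrite Rabs_Ropp in Hle. lra. }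
  change (Rpower (1 + s * y) c) with (f y).
  destruct (Taylor_Lagrange f 3 0 y) as [z [Hz ->]]; [lra| |].
  { intros t Ht k _. apply Derive_n_df. pose proof (Hbase t Ht); lra. }
  cbn [sum_f_R0].
  rewrite !(proj2 (Derive_n_df _ 0 ltac:(lra))).
  rewrite (proj2 (Derive_n_df _ z ltac:(pose proof (Hbase z ltac:(lra)); lra))).
  assert (HP : 0 < Rpower (1 + s * z) (c - 4) <= Rpower (1 / 2) (c - 4)).
  { split; [apply exp_pos|]. apply Rpower_le_nonpos_exponent; [lra | apply Hbase | ]; lra. }
  assert (Hs4 : Rabs (s ^ 4) <= 1).
  { rewrite <- RPow_abs, <- (pow1 4). apply pow_incr. split; [apply Rabs_pos | exact Hs]. }
  unfold df, taylor3, taylor3_const.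
  set (P := Rpower (1 + s * z) (c - 4)) in *.
  set (D := falling c 4).
  unfold falling. cbn [prodR Factorial.fact]. rewrite Rmult_0_r, Rplus_0_r, !Rpower_1_l.
  replace (c - INR 4) with (c - 4) by (simpl; ring). fold P.
  match goal with |- Rabs ?e <= _ => replace e with (s ^ 4 * D * P * (y ^ 4 / 24)) by
    (simpl; field) end.
  assert (0 <= y ^ 4) by (apply pow_le; lra).
  rewrite !Rabs_mult, (Rabs_pos_eq P), (Rabs_pos_eq (y ^ 4 / 24)) by lra.
  pose proof (Rabs_pos (s ^ 4)). pose proof (Rabs_pos D).
  apply Rle_trans with (1 * Rabs D * Rpower (1 / 2) (c - 4) * (y ^ 4 / 24)); [|lra].
  apply Rmult_le_compat_r; [lra|].
  apply Rmult_le_compat; nra.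
Qed.
End BinomialTaylor.

Lemma Rpower_taylor3 (c z : R) : c <= 4 -> Rabs z <= 1 / 2 ->
  Rabs (Rpower (1 + z) c - taylor3 c z) <= taylor3_const c * z ^ 4.
Proof.
  intros Hc Hz. pose proof (taylor3_const_nonneg c).
  destruct (Rtotal_order z 0) as [Hneg | [-> | Hpos]].
  - rewrite Rabs_left in Hz by lra.
    replace z with (-1 * (- z)) by ring.
    replace ((-1 * - z) ^ 4) with ((- z) ^ 4) by ring.
    apply taylor3_lagrange; [rewrite Rabs_left | |]; lra.
  - unfold taylor3. rewrite Rplus_0_r, Rpower_1_l.
    replace (1 - _) with 0 by ring. rewrite Rabs_R0. simpl. lra.
  - rewrite Rabs_pos_eq in Hz by lra.
    rewrite <- (Rmult_1_l z).
    replace ((1 * z) ^ 4) with (z ^ 4) by ring.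
    apply taylor3_lagrange; [rewrite Rabs_R1 | |]; lra.
Qed.

(** * The weights *)

Section Weights.
Variable a : R.

Lemma w_S (k : nat) : w a (S k) = w a k * (INR k - a) / (INR k + 1).
Proof.
  unfold w, gbinom. simpl prodR. rewrite fact_simpl, mult_INR, S_INR. simpl pow.
  field. split; [apply INR_fact_neq_0 | pose proof (pos_INR k); lra].
Qed.

Lemma w_S_W0 (k : nat) : w a (S k) = - a / (INR k + 1) * W0 a (S k).
Proof.
  induction k as [|k IH].
  - unfold W0, w, gbinom. simpl. field.
  - change (W0 a (S (S k))) with (W0 a (S k) + w a (S k)).
    rewrite w_S, IH, S_INR. pose proof (pos_INR k). field. lra.
Qed.

Lemma W0_S (n : nat) : (1 <= n)%nat -> W0 a (S n) = W0 a n * (1 - a / INR n).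
Proof.
  intro Hn. destruct n as [|k]; [lia|].
  change (W0 a (S (S k))) with (W0 a (S k) + w a (S k)).
  rewrite w_S_W0, S_INR. pose proof (pos_INR k). field. lra.
Qed.

Lemma W0_pos (n : nat) : a < 1 -> (1 <= n)%nat -> 0 < W0 a n.
Proof.
  intro Ha1. induction n as [|n IH]; intro Hn; [lia|].
  destruct n as [|n].
  - unfold W0, w, gbinom. simpl. lra.
  - rewrite W0_S by lia. apply Rmult_lt_0_compat; [apply IH; lia|].
    rewrite S_INR. pose proof (pos_INR n).
    assert (a / (INR n + 1) < 1) by (apply Rlt_div_l; lra). lra.
Qed.

Lemma W0_S_fact (n : nat) :
  W0 a (S n) * INR (Factorial.fact n) = prodR n (fun k => 1 - a + INR k).
Proof.
  induction n as [|n IH].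
  - unfold W0, w, gbinom. simpl. lra.
  - rewrite W0_S by lia. simpl prodR. rewrite <- IH, fact_simpl, mult_INR, S_INR.
    pose proof (pos_INR n). field. lra.
Qed.

Lemma W0_moment (n : nat) : a < 1 -> (1 <= n)%nat ->
  INR n * W0 a n - sumR n (fun k => INR k * w a k) = (INR n - a) * W0 a n / (1 - a).
Proof.
  intro Ha1. induction n as [|n IH]; intro Hn; [lia|].
  assert (Hstep : INR (S n) * W0 a (S n) - sumR (S n) (fun k => INR k * w a k)
                  = INR n * W0 a n - sumR n (fun k => INR k * w a k) + W0 a (S n)).
  { change (W0 a (S n)) with (W0 a n + w a n). rewrite S_INR. simpl sumR. ring. }
  rewrite Hstep. destruct n as [|n].
  - unfold W0, w, gbinom. simpl. field. lra.
  - rewrite IH, (W0_S (S n)) by lia. rewrite !S_INR. pose proof (pos_INR n). field. lra.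
Qed.
End Weights.

(** * Gauss's product for Gamma *)

Lemma is_lim_seq_inv_INR : is_lim_seq (fun n => / INR n) 0.
Proof.
  replace (Finite 0) with (Rbar_inv p_infty) by reflexivity.
  apply is_lim_seq_inv; [apply is_lim_seq_INR | discriminate].
Qed.

Lemma Gamma_unique (x g : R) : Un_cv (gamma_seq x) g -> Gamma x = g.
Proof.
  intro Hg. unfold Gamma. apply (UL_sequence (gamma_seq x)); [|exact Hg].
  apply (epsilon_spec (inhabits 0) (fun l => Un_cv (gamma_seq x) l)). exists g; exact Hg.
Qed.

Section GammaShift.
Variable x : R.
Hypothesis Hx : forall k : nat, x + INR k <> 0.

Let x_neq0 : x <> 0.
Proof. specialize (Hx 0%nat). simpl in Hx. lra. Qed.

Lemma gamma_seq_S (m : nat) : (1 <= m)%nat ->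
  gamma_seq x m = gamma_seq (x + 1) m * ((x + INR m + 1) / (x * INR m)).
Proof.
  intro Hm. assert (Hm' : 0 < INR m) by (apply lt_0_INR; lia).
  assert (Hprod : forall n, prodR n (fun k => x + INR k) <> 0).
  { induction n as [|n IH]; simpl; [lra|]. apply Rmult_integral_contrapositive; auto. }
  assert (Hshift : forall n, prodR (S n) (fun k => x + INR k)
                             = x * prodR n (fun k => x + 1 + INR k)).
  { induction n as [|n IH]; [simpl; ring|].
    change (prodR (S (S n)) (fun k => x + INR k))
      with (prodR (S n) (fun k => x + INR k) * (x + INR (S n))).
    rewrite IH. simpl prodR. rewrite S_INR. ring. }
  unfold gamma_seq.
  replace (prodR (S m) (fun k => x + 1 + INR k))
    with (prodR (S m) (fun k => x + INR k) * (x + INR (S m)) / x)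
    by (change (prodR (S m) (fun k => x + INR k) * (x + INR (S m)))
          with (prodR (S (S m)) (fun k => x + INR k));
        rewrite Hshift; field; exact x_neq0).
  rewrite Rpower_plus, Rpower_1 by exact Hm'.
  pose proof (Hprod (S m)). pose proof (Hx (S m)). rewrite S_INR in *.
  assert (0 < Rpower (INR m) x) by apply exp_pos.
  field. repeat split; auto; lra.
Qed.

Lemma is_lim_seq_gamma_ratio :
  is_lim_seq (fun m => (x + INR m + 1) / (x * INR m)) (/ x).
Proof.
  apply is_lim_seq_ext_loc with (fun m => / x + (x + 1) / x * / INR m).
  - exists 1%nat. intros m Hm.
    assert (0 < INR m) by (apply lt_0_INR; lia). field. split; [lra | exact x_neq0].
  - replace (Finite (/ x)) with (Finite (/ x + (x + 1) / x * 0)) by (f_equal; ring).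
    apply is_lim_seq_plus'; [apply is_lim_seq_const|].
    apply is_lim_seq_mult'; [apply is_lim_seq_const | apply is_lim_seq_inv_INR].
Qed.

Lemma Gamma_seq_pred (g : R) : Un_cv (gamma_seq (x + 1)) g -> Un_cv (gamma_seq x) (g / x).
Proof.
  intro Hg. apply is_lim_seq_Reals in Hg. apply is_lim_seq_Reals.
  apply is_lim_seq_ext_loc with
    (fun m => gamma_seq (x + 1) m * ((x + INR m + 1) / (x * INR m))).
  - exists 1%nat. intros m Hm. symmetry. apply gamma_seq_S, Hm.
  - apply is_lim_seq_mult'; [exact Hg | apply is_lim_seq_gamma_ratio].
Qed.

Lemma Gamma_seq_succ (g : R) : Un_cv (gamma_seq x) g -> Un_cv (gamma_seq (x + 1)) (g * x).
Proof.
  intro Hg. apply is_lim_seq_Reals in Hg. apply is_lim_seq_Reals.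
  apply is_lim_seq_ext_loc with
    (fun m => gamma_seq x m * / ((x + INR m + 1) / (x * INR m))).
  - exists 1%nat. intros m Hm. rewrite (gamma_seq_S m Hm).
    assert (0 < INR m) by (apply lt_0_INR; lia).
    pose proof (Hx (S m)) as HSm. rewrite S_INR in HSm.
    field. repeat split; try lra; exact x_neq0.
  - replace (g * x) with (g * / / x) by (field; exact x_neq0).
    apply is_lim_seq_mult'; [exact Hg|].
    apply (is_lim_seq_inv _ (Finite (/ x))); [apply is_lim_seq_gamma_ratio|].
    intro E. injection E. apply Rinv_neq_0_compat, x_neq0.
Qed.
End GammaShift.

Lemma plus_INR_neq_0 (x : R) (m : nat) :
  - INR m - 1 < x < - INR m -> forall k : nat, x + INR k <> 0.
Proof.
  intros Hx k. destruct (Nat.le_gt_cases k m) as [Hk | Hk].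
  - apply le_INR in Hk. lra.
  - apply (le_INR (S m)) in Hk. rewrite S_INR in Hk. lra.
Qed.

(** * Telescoping bounds *)

Lemma telescoping_bound (u t : nat -> R) (N : nat) :
  (forall n, (N <= n)%nat -> Rabs (u (S n) - u n) <= t n - t (S n)) ->
  forall n m, (N <= n <= m)%nat -> Rabs (u m - u n) <= t n - t m.
Proof.
  intros Hstep n m Hnm. replace m with (n + (m - n))%nat by lia.
  induction (m - n)%nat as [|d IH].
  - rewrite Nat.add_0_r, !Rminus_diag, Rabs_R0. lra.
  - rewrite Nat.add_succ_r.
    replace (u (S (n + d)) - u n)
      with ((u (S (n + d)) - u (n + d)%nat) + (u (n + d)%nat - u n)) by ring.
    eapply Rle_trans; [apply Rabs_triang|].
    pose proof (Hstep (n + d)%nat ltac:(lia)). lra.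
Qed.

Lemma is_lim_seq_of_telescoping_bound (u t : nat -> R) (N : nat) :
  (forall n, (N <= n)%nat -> Rabs (u (S n) - u n) <= t n - t (S n)) ->
  is_lim_seq t 0 ->
  exists l : R, is_lim_seq u l /\ forall n, (N <= n)%nat -> Rabs (u n - l) <= t n.
Proof.
  intros Hstep Ht.
  pose proof (telescoping_bound u t N Hstep) as Htele.
  assert (Hcauchy : ex_lim_seq_cauchy u).
  { intro eps. apply is_lim_seq_Reals in Ht.
    destruct (Ht (eps / 4) ltac:(destruct eps; simpl; lra)) as [M HM].
    exists (max M N). intros j k Hj Hk. unfold R_dist in HM.
    pose proof (HM (max M N) (Nat.le_max_l _ _)). pose proof (HM j ltac:(lia)).
    pose proof (HM k ltac:(lia)).
    pose proof (Htele (max M N) j ltac:(lia)). pose proof (Htele (max M N) k ltac:(lia)).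
    replace (u j - u k) with ((u j - u (max M N)) - (u k - u (max M N))) by ring.
    eapply Rle_lt_trans; [apply Rabs_triang|]. rewrite Rabs_Ropp.
    rewrite Rminus_0_r in *. destruct eps as [e He]; simpl in *.
    repeat match goal with H : Rabs _ < _ |- _ => apply Rabs_def2 in H end. lra. }
  apply ex_lim_seq_cauchy_corr in Hcauchy. destruct Hcauchy as [l Hl].
  exists l. split; [exact Hl|]. intros n Hn.
  assert (Hle : Rbar_le (Rbar_abs (l - u n)) (t n - 0)).
  { apply (is_lim_seq_le_loc (fun m => Rabs (u m - u n)) (fun m => t n - t m)).
    - exists n. intros m Hm. apply Htele. lia.
    - apply is_lim_seq_abs, (is_lim_seq_minus' _ _ l (u n)); [exact Hl | apply is_lim_seq_const].
    - apply is_lim_seq_minus'; [apply is_lim_seq_const | exact Ht]. }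
  simpl in Hle. rewrite Rminus_0_r, <- Rabs_Ropp in Hle.
  replace (u n - l) with (- (l - u n)) by ring. exact Hle.
Qed.

Definition cubic_tail (K : R) (n : nat) : R := K * (/ (INR n - 1)) ^ 3.

Lemma is_lim_seq_cubic_tail (K : R) : is_lim_seq (cubic_tail K) 0.
Proof.
  replace (Finite 0) with (Finite (K * 0 ^ 3)) by (f_equal; ring).
  apply (is_lim_seq_continuous (fun y => K * y ^ 3)); [reg|].
  apply is_lim_seq_incr_1.
  apply is_lim_seq_ext with (fun n => / INR n); [|exact is_lim_seq_inv_INR].
  intro n. rewrite S_INR. f_equal. ring.
Qed.

Lemma cubic_tail_step (K : R) (n : nat) : 0 <= K -> (2 <= n)%nat ->
  3 * K / INR n ^ 4 <= cubic_tail K n - cubic_tail K (S n).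
Proof.
  intros HK Hn. assert (Hr : 2 <= INR n) by (apply (le_INR 2); lia).
  unfold cubic_tail. rewrite S_INR. replace (INR n + 1 - 1) with (INR n) by ring.
  assert (E : (/ (INR n - 1)) ^ 3 - (/ INR n) ^ 3 - 3 / INR n ^ 4
              = (6 * INR n ^ 2 - 8 * INR n + 3) / ((INR n - 1) ^ 3 * INR n ^ 4))
    by (field; lra).
  assert (0 <= (6 * INR n ^ 2 - 8 * INR n + 3) / ((INR n - 1) ^ 3 * INR n ^ 4)).
  { apply Rdiv_le_0_compat; [nra|]. apply Rmult_lt_0_compat; apply pow_lt; lra. }
  replace (3 * K / INR n ^ 4) with (K * (3 / INR n ^ 4)) by (field; lra).
  replace (K * (/ (INR n - 1)) ^ 3 - K * (/ INR n) ^ 3)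
    with (K * ((/ (INR n - 1)) ^ 3 - (/ INR n) ^ 3)) by ring.
  apply Rmult_le_compat_l; lra.
Qed.

Lemma cubic_tail_bounds (K : R) (m n : nat) : 0 <= K -> (2 <= m <= n)%nat ->
  cubic_tail K n <= cubic_tail K m /\ cubic_tail K n <= 8 * K / INR n ^ 3.
Proof.
  intros HK Hmn.
  assert (Hm : 2 <= INR m) by (apply (le_INR 2); lia).
  assert (Hn : INR m <= INR n) by (apply le_INR; lia).
  assert (Hinv : 0 < / (INR n - 1) <= / (INR m - 1)).
  { split; [apply Rinv_0_lt_compat | apply Rinv_le_contravar]; lra. }
  unfold cubic_tail. split.
  - apply Rmult_le_compat_l; [lra|]. apply pow_incr. lra.
  - assert (/ (INR n - 1) <= 2 * / INR n).
    { replace (2 * / INR n) with (/ (INR n / 2)) by (field; lra).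
      apply Rinv_le_contravar; lra. }
    replace (8 * K / INR n ^ 3) with (K * (2 * / INR n) ^ 3) by (field; lra).
    apply Rmult_le_compat_l; [lra|]. apply pow_incr. lra.
Qed.

(** * Asymptotics of W0 and W1 *)

Fixpoint horner (cs : list R) (x : R) : R :=
  match cs with nil => 0 | c :: cs' => c + x * horner cs' x end.

Lemma horner_bound (cs : list R) (x : R) :
  0 <= x <= 1 -> Rabs (horner cs x) <= fold_right Rplus 0 (map Rabs cs).
Proof.
  intro Hx. induction cs as [|c cs IH]; simpl.
  - rewrite Rabs_R0. lra.
  - eapply Rle_trans; [apply Rabs_triang|]. apply Rplus_le_compat_l.
    rewrite Rabs_mult, (Rabs_pos_eq x) by lra.
    pose proof (Rabs_pos (horner cs x)). nra.
Qed.

Section NormalizedW0.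
Variable a : R.
Hypothesis Ha0 : 0 < a.
Hypothesis Ha1 : a < 1.

Definition W0_coef1 : R := a * (1 + a) / 2.
Definition W0_coef2 : R := a * (1 + a) * (2 + a) * (1 + 3 * a) / 24.

Definition W0_series (x : R) : R := 1 + W0_coef1 * x + W0_coef2 * x ^ 2.

Lemma W0_coefs_pos : 0 < W0_coef1 /\ 0 < W0_coef2.
Proof.
  unfold W0_coef1, W0_coef2. split; apply Rdiv_lt_0_compat; try lra; [nra|].
  repeat apply Rmult_lt_0_compat; lra.
Qed.

Lemma W0_series_ge_1 (x : R) : 0 <= x -> 1 <= W0_series x.
Proof.
  intro Hx. pose proof W0_coefs_pos. unfold W0_series.
  assert (0 <= x ^ 2) by (apply pow_le, Hx). nra.
Qed.

Lemma W0_series_le (x : R) : 0 <= x <= 1 -> W0_series x <= 1 + W0_coef1 + W0_coef2.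
Proof.
  intro Hx. pose proof W0_coefs_pos. unfold W0_series.
  assert (x ^ 2 <= 1) by (simpl; nra). nra.
Qed.

(* Coefficients of the quotient by x^4 in [step_ratio_defect_identity], computed by expanding. *)
Definition step_ratio_defect_coeffs : list R :=
  [ a / 4 - 5/6 * a^2 - 13/16 * a^3 - 53/48 * a^4 - 7/16 * a^5 - 1/16 * a^6;
    a / 3 - 23/36 * a^2 - 109/72 * a^4 - 19/24 * a^5 - 25/72 * a^6 - 1/24 * a^7;
    - 11/72 * a^2 + 47/144 * a^3 - 61/144 * a^4 - 17/72 * a^5 - 29/72 * a^6
      - 13/144 * a^7 - 1/48 * a^8;
    1/36 * a^2 - 7/72 * a^3 + 1/36 * a^4 + 11/72 * a^5 - 1/72 * a^6 - 1/18 * a^7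
      - 1/24 * a^8;
    - 1/36 * a^3 - 1/12 * a^4 + 5/144 * a^5 + 5/48 * a^6 - 1/144 * a^7 - 1/48 * a^8 ].

Lemma step_ratio_defect_identity (x : R) : 1 + x <> 0 ->
  taylor3 a x * (1 - a * x) * W0_series x * (1 + x) ^ 2
  - (1 + x) ^ 2 * W0_series (x / (1 + x))
  = x ^ 4 * horner step_ratio_defect_coeffs x.
Proof.
  intro Hx. unfold taylor3, W0_series, W0_coef1, W0_coef2, step_ratio_defect_coeffs. simpl.
  field. exact Hx.
Qed.

Definition step_ratio (x : R) : R :=
  Rpower (1 + x) a * (1 - a * x) * W0_series x / W0_series (x / (1 + x)).

Definition step_ratio_const : R :=
  fold_right Rplus 0 (map Rabs step_ratio_defect_coeffs)
  + taylor3_const a * ((1 + W0_coef1 + W0_coef2) * 4).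

Lemma step_ratio_bound (x : R) :
  0 < x <= 1 / 2 -> Rabs (step_ratio x - 1) <= step_ratio_const * x ^ 4.
Proof.
  intro Hx.
  pose proof (Rpower_taylor3 a x ltac:(lra) ltac:(rewrite Rabs_pos_eq; lra)) as Htay.
  set (E := Rpower (1 + x) a - taylor3 a x) in Htay.
  set (Den := (1 + x) ^ 2 * W0_series (x / (1 + x))).
  set (G := (1 - a * x) * W0_series x * (1 + x) ^ 2).
  assert (HFx : 1 <= W0_series x <= 1 + W0_coef1 + W0_coef2)
    by (split; [apply W0_series_ge_1 | apply W0_series_le]; lra).
  assert (HFy : 1 <= W0_series (x / (1 + x)))
    by (apply W0_series_ge_1, Rdiv_le_0_compat; lra).
  assert (HDen : 1 <= Den) by (unfold Den; simpl; nra).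
  assert (HG : 0 <= G <= (1 + W0_coef1 + W0_coef2) * 4).
  { unfold G. assert (0 < 1 - a * x <= 1) by nra. assert (1 <= (1 + x) ^ 2 <= 4) by (simpl; nra).
    split; [apply Rmult_le_pos; [apply Rmult_le_pos|]; lra|].
    apply Rmult_le_compat; try lra; [apply Rmult_le_pos; lra|]. nra. }
  assert (Hnum : step_ratio x - 1 = (x ^ 4 * horner step_ratio_defect_coeffs x + E * G) / Den).
  { rewrite <- step_ratio_defect_identity by lra. unfold step_ratio, E, G, Den. field. lra. }
  rewrite Hnum, Rabs_div, (Rabs_pos_eq Den) by lra.
  apply Rle_trans with (Rabs (x ^ 4 * horner step_ratio_defect_coeffs x + E * G)).
  { apply Rle_div_l; [lra|].
    pose proof (Rabs_pos (x ^ 4 * horner step_ratio_defect_coeffs x + E * G)). nra. }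
  eapply Rle_trans; [apply Rabs_triang|].
  rewrite !Rabs_mult, (Rabs_pos_eq (x ^ 4)), (Rabs_pos_eq G) by (try apply pow_le; lra).
  pose proof (horner_bound step_ratio_defect_coeffs x ltac:(lra)).
  pose proof (Rabs_pos E). pose proof (taylor3_const_nonneg a).
  assert (0 <= x ^ 4) by (apply pow_le; lra).
  unfold step_ratio_const. nra.
Qed.

Lemma step_ratio_const_nonneg : 0 <= step_ratio_const.
Proof.
  pose proof (step_ratio_bound (1 / 2) ltac:(lra)).
  pose proof (Rabs_pos (step_ratio (1 / 2) - 1)). nra.
Qed.

Definition W0_normalized (n : nat) : R :=
  Rpower (INR n) a * W0 a n / W0_series (/ INR n).

Lemma W0_normalized_pos (n : nat) : (1 <= n)%nat -> 0 < W0_normalized n.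
Proof.
  intro Hn. assert (0 < / INR n) by (apply Rinv_0_lt_compat, lt_0_INR; lia).
  pose proof (W0_series_ge_1 (/ INR n) ltac:(lra)).
  apply Rdiv_lt_0_compat; [|lra]. apply Rmult_lt_0_compat; [apply exp_pos | apply W0_pos; auto].
Qed.

Lemma W0_normalized_S (n : nat) : (1 <= n)%nat ->
  W0_normalized (S n) = W0_normalized n * step_ratio (/ INR n).
Proof.
  intro Hn. assert (Hn0 : 0 < INR n) by (apply lt_0_INR; lia).
  assert (Hx : 0 < / INR n) by (apply Rinv_0_lt_compat, Hn0).
  assert (Hpow : Rpower (INR n + 1) a = Rpower (INR n) a * Rpower (1 + / INR n) a).
  { rewrite Rpower_mult_distr by lra. f_equal. field. lra. }
  unfold W0_normalized, step_ratio. rewrite W0_S, S_INR, Hpow by (auto; lia).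
  replace (/ (INR n + 1)) with (/ INR n / (1 + / INR n)) by (field; lra).
  pose proof (W0_series_ge_1 (/ INR n / (1 + / INR n)) ltac:(apply Rdiv_le_0_compat; lra)).
  pose proof (W0_series_ge_1 (/ INR n) ltac:(lra)).
  field. lra.
Qed.

Lemma ln_W0_normalized_step (n : nat) : (2 <= n)%nat -> step_ratio_const / INR n ^ 4 <= 1 / 2 ->
  Rabs (ln (W0_normalized (S n)) - ln (W0_normalized n)) <= 2 * step_ratio_const / INR n ^ 4.
Proof.
  intros Hn Hsmall. assert (Hn2 : 2 <= INR n) by (apply (le_INR 2); lia).
  pose proof (W0_normalized_pos n ltac:(lia)).
  rewrite <- ln_div, W0_normalized_S by (try apply W0_normalized_pos; lia).
  replace (W0_normalized n * step_ratio (/ INR n) / W0_normalized n) with (step_ratio (/ INR n))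
    by (field; lra).
  assert (Hr : Rabs (step_ratio (/ INR n) - 1) <= step_ratio_const / INR n ^ 4).
  { unfold Rdiv. rewrite <- pow_inv. apply step_ratio_bound. split.
    - apply Rinv_0_lt_compat; lra.
    - replace (1 / 2) with (/ 2) by field. apply Rinv_le_contravar; lra. }
  eapply Rle_trans; [apply Rabs_ln_le; lra|]. unfold Rdiv in *. lra.
Qed.

Lemma W0_normalized_cv : exists L, 0 < L /\ is_lim_seq W0_normalized L /\
  exists C N, forall n, (N <= n)%nat -> Rabs (W0_normalized n - L) <= C / INR n ^ 3.
Proof.
  set (K := step_ratio_const). assert (HK : 0 <= K) by apply step_ratio_const_nonneg.
  destruct (INR_unbounded (2 * K)) as [M HM].
  set (N0 := Nat.max 2 M).
  set (t := cubic_tail (2 * K / 3)).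
  assert (Hstep : forall n, (N0 <= n)%nat ->
    Rabs (ln (W0_normalized (S n)) - ln (W0_normalized n)) <= t n - t (S n)).
  { intros n Hn. assert (Hn2 : 2 <= INR n) by (apply (le_INR 2); lia).
    assert (HnK : 2 * K < INR n) by (apply Rlt_le_trans with (INR M); [lra | apply le_INR; lia]).
    assert (INR n <= INR n ^ 4).
    { replace (INR n ^ 4) with (INR n * INR n ^ 3) by ring.
      assert (1 <= INR n ^ 3) by (rewrite <- (pow1 3); apply pow_incr; lra). nra. }
    eapply Rle_trans; [apply ln_W0_normalized_step; [lia|]|].
    - fold K. apply Rle_div_l; [apply pow_lt|]; lra.
    - replace (2 * step_ratio_const) with (3 * (2 * K / 3)) by (unfold K; field).
      apply cubic_tail_step; [lra | lia]. }
  destruct (is_lim_seq_of_telescoping_bound _ t N0 Hstep (is_lim_seq_cubic_tail _))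
    as [l [Hl Hbound]].
  assert (Hexp : forall n, (1 <= n)%nat -> exp (ln (W0_normalized n)) = W0_normalized n)
    by (intros n Hn; apply exp_ln, W0_normalized_pos, Hn).
  exists (exp l). split; [apply exp_pos | split].
  - apply is_lim_seq_ext_loc with (fun n => exp (ln (W0_normalized n))).
    + exists 1%nat. exact Hexp.
    + apply is_lim_seq_continuous; [apply derivable_continuous_pt, derivable_pt_exp | exact Hl].
  - exists (exp l * exp (t N0) * (8 * (2 * K / 3))), N0. intros n Hn.
    destruct (cubic_tail_bounds (2 * K / 3) N0 n ltac:(lra) ltac:(lia)) as [Hmono Hcube].
    rewrite <- (Hexp n) by lia.
    eapply Rle_trans; [apply Rabs_exp_sub_exp_le; [apply Hbound, Hn | exact Hmono]|].
    pose proof (exp_pos l). pose proof (exp_pos (t N0)).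
    unfold Rdiv in *. rewrite (Rmult_assoc (exp l * exp (t N0))).
    apply Rmult_le_compat_l; [nra | exact Hcube].
Qed.

Lemma gamma_seq_1_minus (m : nat) : (1 <= m)%nat ->
  gamma_seq (1 - a) m = / (1 + / INR m) * Rpower (1 + 2 * / INR m) a
                        / (W0_normalized (m + 2) * W0_series (/ INR (m + 2))).
Proof.
  intro Hm. assert (Hm0 : 0 < INR m) by (apply lt_0_INR; lia).
  assert (Hm2 : INR (m + 2) = INR m + 2) by (rewrite plus_INR; simpl; ring).
  assert (0 < 1 + 2 * / INR m) by (pose proof (Rinv_0_lt_compat _ Hm0); lra).
  assert (Hpow : Rpower (INR m + 2) a = Rpower (INR m) a * Rpower (1 + 2 * / INR m) a).
  { rewrite Rpower_mult_distr by lra. f_equal. field. lra. }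
  pose proof (W0_pos a (m + 2) Ha1 ltac:(lia)).
  pose proof (W0_series_ge_1 (/ INR (m + 2)) ltac:(left; apply Rinv_0_lt_compat; lra)).
  pose proof (INR_fact_neq_0 m).
  assert (0 < Rpower (INR m) a) by apply exp_pos.
  assert (0 < Rpower (1 + 2 * / INR m) a) by apply exp_pos.
  unfold gamma_seq, W0_normalized.
  rewrite <- (W0_S_fact a (S m)), fact_simpl, mult_INR, S_INR.
  replace (S (S m)) with (m + 2)%nat by lia.
  rewrite Hm2 in *. rewrite Hpow. replace (1 - a) with (1 + - a) by ring.
  rewrite Rpower_plus, Rpower_1, Rpower_Ropp by lra.
  field. repeat split; try lra; assumption.
Qed.

Lemma Gamma_1_minus_cv (L : R) : 0 < L -> is_lim_seq W0_normalized L ->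
  Un_cv (gamma_seq (1 - a)) (/ L).
Proof.
  intros HL Hb. apply is_lim_seq_Reals.
  apply is_lim_seq_ext_loc with (fun m => / (1 + / INR m) * Rpower (1 + 2 * / INR m) a
                        / (W0_normalized (m + 2) * W0_series (/ INR (m + 2)))).
  { exists 1%nat. intros m Hm. symmetry. apply gamma_seq_1_minus, Hm. }
  assert (Hinv : is_lim_seq (fun m => / INR (m + 2)) 0)
    by (apply (is_lim_seq_incr_n (fun m => / INR m) 2), is_lim_seq_inv_INR).
  replace (Finite (/ L)) with
    (Finite (/ (1 + 0) * Rpower (1 + 2 * 0) a / (L * W0_series 0)))
    by (f_equal; rewrite Rmult_0_r, Rplus_0_r, Rpower_1_l; unfold W0_series; field; lra).
  apply is_lim_seq_mult'; [apply is_lim_seq_mult'|].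
  - apply (is_lim_seq_inv _ (Finite (1 + 0)));
      [apply is_lim_seq_plus'; [apply is_lim_seq_const | apply is_lim_seq_inv_INR]|].
    intro E. injection E. lra.
  - apply (is_lim_seq_continuous (fun y => Rpower (1 + 2 * y) a)).
    + apply continuity_pt_comp with (f2 := fun x => Rpower x a); [reg|].
      apply derivable_continuous_pt. eexists. apply derivable_pt_lim_power. lra.
    + apply is_lim_seq_inv_INR.
  - apply (is_lim_seq_inv _ (Finite (L * W0_series 0))).
    + apply is_lim_seq_mult'; [apply (is_lim_seq_incr_n W0_normalized 2), Hb|].
      apply is_lim_seq_continuous; [unfold W0_series; reg | exact Hinv].
    + unfold W0_series. intro E. injection E.
      rewrite !Rmult_0_l, !Rmult_0_r, !Rplus_0_r, Rmult_1_r. lra.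
Qed.

Lemma Gamma_values : 0 < Gamma (1 - a) /\ Gamma (- a) = Gamma (1 - a) / (- a) /\
  Gamma (-1 - a) = Gamma (- a) / (-1 - a) /\ Gamma (2 - a) = Gamma (1 - a) * (1 - a).
Proof.
  destruct W0_normalized_cv as [L [HL [Hb _]]].
  pose proof (Gamma_1_minus_cv L HL Hb) as G1.
  assert (G0 : Un_cv (gamma_seq (- a)) (/ L / (- a))).
  { apply Gamma_seq_pred; [apply (plus_INR_neq_0 _ 0); simpl; lra|].
    replace (- a + 1) with (1 - a) by ring. exact G1. }
  assert (Gm : Un_cv (gamma_seq (-1 - a)) (/ L / (- a) / (-1 - a))).
  { apply Gamma_seq_pred; [apply (plus_INR_neq_0 _ 1); simpl; lra|].
    replace (-1 - a + 1) with (- a) by ring. exact G0. }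
  assert (G2 : Un_cv (gamma_seq (2 - a)) (/ L * (1 - a))).
  { replace (2 - a) with (1 - a + 1) by ring. apply Gamma_seq_succ; [|exact G1].
    intro k. pose proof (pos_INR k). lra. }
  rewrite (Gamma_unique _ _ G1), (Gamma_unique _ _ G0), (Gamma_unique _ _ Gm),
    (Gamma_unique _ _ G2).
  repeat split; try reflexivity. apply Rinv_0_lt_compat, HL.
Qed.

Lemma W0_expansion : exists C N, forall n, (N <= n)%nat ->
  Rabs (W0 a n - W0_series (/ INR n) / (Gamma (1 - a) * Rpower (INR n) a))
  <= C / Rpower (INR n) (3 + a).
Proof.
  destruct W0_normalized_cv as [L [HL [Hb [C [N HC]]]]].
  rewrite (Gamma_unique _ _ (Gamma_1_minus_cv L HL Hb)).
  exists (C * (1 + W0_coef1 + W0_coef2)), (Nat.max 1 N). intros n Hn.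
  assert (Hn1 : 1 <= INR n) by (apply (le_INR 1); lia).
  assert (Hx : 0 < / INR n <= 1).
  { split; [apply Rinv_0_lt_compat; lra|]. rewrite <- Rinv_1. apply Rinv_le_contravar; lra. }
  pose proof (W0_series_ge_1 (/ INR n) ltac:(lra)).
  pose proof (W0_series_le (/ INR n) ltac:(lra)).
  set (pa := Rpower (INR n) a).
  assert (Hpa : 0 < pa) by apply exp_pos.
  assert (Hp3 : Rpower (INR n) (3 + a) = INR n ^ 3 * pa).
  { replace (3 + a) with (INR 3 + a) by (simpl; ring). apply Rpower_nat_plus. lra. }
  replace (W0 a n - W0_series (/ INR n) / (/ L * pa))
    with ((W0_normalized n - L) * (W0_series (/ INR n) / pa))
    by (unfold W0_normalized; fold pa; field; repeat split; lra).
  rewrite Rabs_mult, (Rabs_pos_eq (W0_series (/ INR n) / pa)) by (apply Rdiv_le_0_compat; lra).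
  pose proof (HC n ltac:(lia)) as Hbn.
  assert (0 < INR n ^ 3) by (apply pow_lt; lra).
  rewrite Hp3.
  replace (C * (1 + W0_coef1 + W0_coef2) / (INR n ^ 3 * pa))
    with (C / INR n ^ 3 * ((1 + W0_coef1 + W0_coef2) / pa)) by (field; lra).
  apply Rmult_le_compat; [apply Rabs_pos | apply Rdiv_le_0_compat; lra | exact Hbn |].
  apply Rmult_le_compat_r; [left; apply Rinv_0_lt_compat|]; lra.
Qed.

Lemma W0_leading_terms (n : nat) : (1 <= n)%nat ->
  W0_series (/ INR n) / (Gamma (1 - a) * Rpower (INR n) a)
  = 1 / (Gamma (1 - a) * Rpower (INR n) a)
    - (a + 1) / (2 * Gamma (- a) * Rpower (INR n) (1 + a))
    + (2 + a) * (1 + 3 * a) / (24 * Gamma (-1 - a) * Rpower (INR n) (2 + a)).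
Proof.
  intro Hn. assert (Hn0 : 0 < INR n) by (apply lt_0_INR; lia).
  destruct Gamma_values as [HG [G0 [Gm _]]].
  assert (P2 : Rpower (INR n) (2 + a) = INR n ^ 2 * Rpower (INR n) a)
    by (replace (2 + a) with (INR 2 + a) by (simpl; ring); apply Rpower_nat_plus, Hn0).
  rewrite Rpower_plus, Rpower_1, P2, Gm, G0 by exact Hn0.
  assert (0 < Rpower (INR n) a) by apply exp_pos.
  unfold W0_series, W0_coef1, W0_coef2. field. repeat split; lra.
Qed.

Definition W1_coef3 : R := - a^2 / 12 - 3/8 * a^3 - 19/48 * a^4 - a^5 / 8 - a^6 / 48.

Lemma W1_defect_identity (x : R) :
  (1 - a * x) * W0_series x - taylor3 (1 - a) (- (a * x / 2))
  = a * (1 - a) * (2 - a) / 24 * x ^ 2 + W1_coef3 * x ^ 3.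
Proof. unfold W0_series, W0_coef1, W0_coef2, taylor3, W1_coef3. field. Qed.

Lemma W1_error_decomposition (n : nat) : (1 <= n)%nat ->
  W1 a n - (a - 2) / (24 * Gamma (- a) * Rpower (INR n) (1 + a))
  = ((INR n - a) * (W0 a n - W0_series (/ INR n) / (Gamma (1 - a) * Rpower (INR n) a))
     + (W1_coef3 - INR n ^ 3 * (Rpower (1 - a / (2 * INR n)) (1 - a)
                                - taylor3 (1 - a) (- (a / (2 * INR n)))))
       / (Gamma (1 - a) * (INR n ^ 2 * Rpower (INR n) a))) / (1 - a).
Proof.
  intro Hn. destruct Gamma_values as [HG [G0 [_ G2]]].
  unfold W1. rewrite W0_moment by (auto; lia).
  set (r := INR n). assert (Hr : 1 <= r) by (apply (le_INR 1); lia).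
  set (pa := Rpower r a). assert (Hpa : 0 < pa) by apply exp_pos.
  set (G := Gamma (1 - a)) in *.
  set (E := Rpower (1 - a / (2 * r)) (1 - a) - taylor3 (1 - a) (- (a / (2 * r)))).
  assert (HT : taylor3 (1 - a) (- (a / (2 * r))) = (1 - a * / r) * W0_series (/ r)
                 - a * (1 - a) * (2 - a) / 24 * (/ r) ^ 2 - W1_coef3 * (/ r) ^ 3).
  { pose proof (W1_defect_identity (/ r)) as Hid.
    replace (a / (2 * r)) with (a * / r / 2) by (field; lra). lra. }
  assert (Hpow : Rpower (r - a / 2) (1 - a) = r / pa * (taylor3 (1 - a) (- (a / (2 * r))) + E)).
  { unfold E. replace (r - a / 2) with (r * (1 - a / (2 * r))) by (field; lra).
    assert (a / (2 * r) < 1) by (apply Rlt_div_l; lra).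
    rewrite <- Rpower_mult_distr by lra.
    replace (1 - a) with (INR 1 + - a) at 1 by (simpl; ring).
    rewrite Rpower_nat_plus, Rpower_Ropp by lra. unfold pa. field. apply Rgt_not_eq, exp_pos. }
  rewrite Hpow, HT, G0, G2, Rpower_plus, Rpower_1 by lra. fold pa. fold E.
  field. repeat split; lra.
Qed.

Lemma W1_remainder_bound (n : nat) : (1 <= n)%nat ->
  Rabs (INR n ^ 3 * (Rpower (1 - a / (2 * INR n)) (1 - a)
                     - taylor3 (1 - a) (- (a / (2 * INR n)))))
  <= taylor3_const (1 - a).
Proof.
  intro Hn. set (r := INR n). assert (Hr : 1 <= r) by (apply (le_INR 1); lia).
  set (z := - (a / (2 * r))).
  assert (Hz : Rabs z <= 1 / 2).
  { unfold z. rewrite Rabs_Ropp, Rabs_pos_eq by (apply Rdiv_le_0_compat; lra).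
    apply Rle_div_l; lra. }
  pose proof (Rpower_taylor3 (1 - a) z ltac:(lra) Hz) as Htay.
  replace (1 - a / (2 * r)) with (1 + z) by (unfold z; ring).
  assert (Hz4 : r ^ 3 * z ^ 4 <= 1).
  { unfold z. replace (r ^ 3 * (- (a / (2 * r))) ^ 4) with (a ^ 4 / (16 * r)) by (field; lra).
    assert (a ^ 4 <= 1) by (rewrite <- (pow1 4); apply pow_incr; lra).
    apply Rle_div_l; lra. }
  pose proof (taylor3_const_nonneg (1 - a)).
  assert (0 < r ^ 3) by (apply pow_lt; lra).
  rewrite Rabs_mult, (Rabs_pos_eq (r ^ 3)) by lra.
  apply Rle_trans with (r ^ 3 * (taylor3_const (1 - a) * z ^ 4)); [apply Rmult_le_compat_l; lra|].
  replace (r ^ 3 * (taylor3_const (1 - a) * z ^ 4))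
    with (taylor3_const (1 - a) * (r ^ 3 * z ^ 4)) by ring.
  rewrite <- (Rmult_1_r (taylor3_const (1 - a))) at 2. apply Rmult_le_compat_l; lra.
Qed.

Lemma W1_expansion : exists C N, forall n, (N <= n)%nat ->
  Rabs (W1 a n - (a - 2) / (24 * Gamma (- a) * Rpower (INR n) (1 + a)))
  <= C / Rpower (INR n) (2 + a).
Proof.
  destruct W0_expansion as [C0 [N0 HW0]].
  destruct Gamma_values as [HG _].
  set (G := Gamma (1 - a)) in *. set (K := taylor3_const (1 - a)).
  exists ((C0 + (Rabs W1_coef3 + K) / G) / (1 - a)), (Nat.max 1 N0). intros n Hn.
  rewrite W1_error_decomposition by lia. fold G.
  pose proof (W1_remainder_bound n ltac:(lia)) as HE. fold K in HE.
  pose proof (HW0 n ltac:(lia)) as HR.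
  set (r := INR n) in *. assert (Hr : 1 <= r) by (apply (le_INR 1); lia).
  set (pa := Rpower r a) in *. assert (Hpa : 0 < pa) by apply exp_pos.
  assert (Hp2 : Rpower r (2 + a) = r ^ 2 * pa).
  { replace (2 + a) with (INR 2 + a) by (simpl; ring). apply Rpower_nat_plus. lra. }
  assert (Hp3 : Rpower r (3 + a) = r * (r ^ 2 * pa)).
  { replace (3 + a) with (INR 3 + a) by (simpl; ring). rewrite Rpower_nat_plus by lra.
    unfold pa. ring. }
  assert (Hq : 0 < r ^ 2 * pa) by (apply Rmult_lt_0_compat; [apply pow_lt|]; lra).
  rewrite Hp3 in HR. rewrite Hp2.
  replace ((C0 + (Rabs W1_coef3 + K) / G) / (1 - a) / (r ^ 2 * pa))
    with ((r * (C0 / (r * (r ^ 2 * pa))) + (Rabs W1_coef3 + K) / (G * (r ^ 2 * pa))) / (1 - a))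
    by (field; repeat split; lra).
  rewrite Rabs_div, (Rabs_pos_eq (1 - a)) by lra.
  apply Rmult_le_compat_r; [left; apply Rinv_0_lt_compat; lra|].
  eapply Rle_trans; [apply Rabs_triang|]. apply Rplus_le_compat.
  - rewrite Rabs_mult, (Rabs_pos_eq (r - a)) by lra.
    apply Rmult_le_compat; [lra | apply Rabs_pos | lra | exact HR].
  - assert (0 < G * (r ^ 2 * pa)) by (apply Rmult_lt_0_compat; lra).
    rewrite Rabs_div, (Rabs_pos_eq (G * (r ^ 2 * pa))) by lra.
    apply Rmult_le_compat_r; [left; apply Rinv_0_lt_compat; lra|].
    set (X := r ^ 3 * _) in *. unfold Rminus.
    eapply Rle_trans; [apply Rabs_triang|]. rewrite Rabs_Ropp. lra.
Qed.
End NormalizedW0.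

Theorem lemma2 (alpha : R) (Ha0 : 0 < alpha) (Ha1 : alpha < 1) :
  (exists C N, forall n : nat, (2 <= n)%nat -> (N <= n)%nat ->
     Rabs (W0 alpha n
           - ( 1 / (Gamma (1 - alpha) * Rpower (INR n) alpha)
             - (alpha + 1) / (2 * Gamma (- alpha) * Rpower (INR n) (1 + alpha))
             + (2 + alpha) * (1 + 3 * alpha)
                 / (24 * Gamma (-1 - alpha) * Rpower (INR n) (2 + alpha))))
     <= C / Rpower (INR n) (3 + alpha))
  /\
  (exists C N, forall n : nat, (2 <= n)%nat -> (N <= n)%nat ->
     Rabs (W1 alpha n
           - (alpha - 2) / (24 * Gamma (- alpha) * Rpower (INR n) (1 + alpha)))
     <= C / Rpower (INR n) (2 + alpha)).
Proof.
  split.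
  - destruct (W0_expansion alpha Ha0 Ha1) as [C [N HW0]].
    exists C, N. intros n Hn2 HnN.
    rewrite <- W0_leading_terms by (auto; lia). apply HW0, HnN.
  - destruct (W1_expansion alpha Ha0 Ha1) as [C [N HW1]].
    exists C, N. intros n _ HnN. apply HW1, HnN.
Qed.
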